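(* In the setting of the context, consider a Case 1 spacetime ($x_-(v)\equiv0$). If there exists $\alpha$ with $0<\alpha<1$ such that $\lim_{v\to\infty}x_+(v)\exp\left[\frac{1-\alpha}{2}h_cX_+(v)\right]>0$ (including the case where the left-hand side diverges to $+\infty$), then the spacetime is of Type 2, i.e. there exist radially outgoing null geodesics strictly between the two AHs that never cross the outer AH, and the event horizon lies in the region $x>0$.
   Context: Spherically symmetric spacetime $ds^2=-f(v,r)A(v,r)^2dv^2+2A(v,r)\,dr\,dv+r^2d\Omega^2$ with $A>0$, $f,A\to1$ as $r\to\infty$, $f(v,0)=1$, $\partial_rf(v,0)=\partial_rA(v,0)=0$; $f(v,\cdot)$ has exactly two zeros $r_+(v)>r_-(v)$ (outer/inner apparent horizons, AHs), $f=F(r-r_+)(r-r_-)$ with $F>0$, and $h=AF>0$. Assumptions: $\partial_v r_+<0$; $r_\pm(v)\to r_c$ as $v\to\infty$; the sign of $\partial_v r_-$ is constant; the $v\to\infty$ limits of $A,F,h$ behave as analytic functions of $r$, so all $\partial_r^n h$ converge as $v\to\infty$; $h_c=\lim_{v\to\infty}h(v,r_c)$. With $x=r-r_c$, $x_\pm=r_\pm-r_c$, and $h$ regarded as a function of $(v,x)$, radially outgoing null geodesics solve $dx/dv=\tfrac12h(v,x)(x-x_+(v))(x-x_-(v))$. $X_+$ is a primitive of $x_+$. Case 1 means $\partial_v r_-=0$. Type 1 (Case 1) means every outgoing null geodesic strictly between the two AHs crosses the outer AH (the inner AH is the event horizon); Type 2 means there is an event horizon strictly outside the inner AH. *)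

From Stdlib Require Import Reals.
From Coquelicot Require Import Coquelicot.
Open Scope R_scope.

(* A radially outgoing null geodesic, in the coordinate x = r - r_c, starting
   at advanced time v0: a function x(v) solving, for every v >= v0,
     dx/dv = 1/2 h(v,x) (x - x_+(v)) (x - x_-(v)). *)
Definition outgoing_geodesic (h : R -> R -> R) (xp xm : R -> R)
    (v0 : R) (x : R -> R) : Prop :=
  forall v, v0 <= v ->
    is_derive x v (1/2 * h v (x v) * (x v - xp v) * (x v - xm v)).

Definition between_AHs (xp xm : R -> R) (v y : R) : Prop :=
  xm v < y /\ y < xp v.

(* Type 2: there is a radially outgoing null geodesic strictly between the two
   AHs which never crosses the outer AH (it stays strictly between the AHs for
   all later times); hence the event horizon lies strictly outside the inner
   AH, i.e. in the region x > x_-. *)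
Definition type2 (h : R -> R -> R) (xp xm : R -> R) : Prop :=
  exists v0 (x : R -> R),
    outgoing_geodesic h xp xm v0 x /\
    forall v, v0 <= v -> between_AHs xp xm v (x v).

From Stdlib Require Import Reals Lra Classical.
From Coquelicot Require Import Coquelicot.
Open Scope R_scope.

(* Write k = (1 - alpha) h_c / 2 and kappa = alpha / (2 - alpha).  For late
   times h is within alpha h_c / 2 of h_c near x = 0, and then inside the wedge
   0 < x < kappa x_+ the geodesic equation makes x exp(k X_+) nonincreasing and
   x exp(h_c X_+) nondecreasing.  As x_+ exp(k X_+) is eventually bounded below
   by some c > 0, a geodesic entering the wedge with x exp(k X_+) < kappa c can
   reach neither its upper edge nor x = 0, so by real induction it stays
   strictly between the apparent horizons forever. *)

Lemma real_induction (G : R -> Prop) (a : R) :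
  G a ->
  (forall t, a <= t -> G t -> at_right t G) ->
  (forall t, a < t -> (forall u, a <= u < t -> G u) -> G t) ->
  forall t, a <= t -> G t.
Proof.
  intros Ga Hopen Hclosed b Hab.
  apply NNPP; intro Gb.
  set (S := fun s => a <= s <= b /\ forall u, a <= u <= s -> G u).
  assert (HSa : S a).
  { split; [lra|]. intros u Hu. replace u with a by lra. exact Ga. }
  assert (HSb : bound S) by (exists b; intros s [Hs _]; lra).
  destruct (completeness S HSb (ex_intro _ a HSa)) as [m [Hub Hlub]].
  assert (Ham : a <= m) by (apply Hub, HSa).
  assert (Hmb : m <= b) by (apply Hlub; intros s [Hs _]; lra).
  assert (Hbelow : forall u, a <= u < m -> G u).
  { intros u Hu. apply NNPP; intro Gu.
    assert (m <= u); [|lra].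
    apply Hlub. intros s [Hs HsG]. apply Rnot_lt_le. intro Hus.
    apply Gu, HsG; lra. }
  assert (Gm : G m).
  { destruct (Req_dec m a) as [->|Hma]; [exact Ga|]. apply Hclosed; [lra|exact Hbelow]. }
  destruct (Hopen m Ham Gm) as [e He].
  assert (Hupto : forall u, a <= u < m + e -> G u).
  { intros u Hu. destruct (Rtotal_order u m) as [Hlt|[->|Hgt]].
    - apply Hbelow; lra.
    - exact Gm.
    - apply He; [|lra]. change (Rabs (u - m) < e). apply Rabs_def1; lra. }
  destruct (Req_dec m b) as [->|Hmb'].
  - apply Gb, Hupto. pose proof (cond_pos e). lra.
  - set (s := Rmin (m + e / 2) b).
    assert (Hs : m < s <= m + e / 2 /\ s <= b).
    { pose proof (cond_pos e). unfold s.
      split; [split; [apply Rmin_glb_lt; lra|apply Rmin_l]|apply Rmin_r]. }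
    assert (HSs : S s) by (split; [lra|intros u Hu; apply Hupto; lra]).
    pose proof (Hub s HSs). lra.
Qed.

Lemma continuous_lt_locally (f g : R -> R) (t : R) :
  continuous f t -> continuous g t -> f t < g t -> locally t (fun u => f u < g u).
Proof.
  intros Hf Hg Hlt.
  assert (Hgap := continuous_minus g f t Hg Hf).
  assert (Hpos : locally (minus (g t) (f t)) (fun y => 0 < y)).
  { apply open_gt. unfold minus, plus, opp; simpl. lra. }
  apply (filter_imp (fun u => 0 < minus (g u) (f u))); [|exact (Hgap _ Hpos)].
  intros u. unfold minus, plus, opp; simpl. lra.
Qed.

Lemma nonincreasing_of_derive_nonpos (f df : R -> R) (a b : R) :
  a <= b ->
  (forall s, a <= s <= b -> is_derive f s (df s)) ->
  (forall s, a <= s < b -> df s <= 0) ->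
  f b <= f a.
Proof.
  intros Hab Hd Hsign.
  assert (Hbefore : forall u, a <= u < b -> f u <= f a).
  { intros u Hu.
    destruct (MVT_gen f a u df) as [c [Hc Hmvt]];
      rewrite Rmin_left, Rmax_right in * by lra.
    - intros s Hs. apply Hd. lra.
    - intros s Hs. apply continuity_pt_filterlim.
      apply (ex_derive_continuous f). exists (df s). apply Hd. lra.
    - assert (df c * (u - a) <= 0) by (apply Rmult_le_0_r; [apply Hsign|]; lra).
      lra. }
  destruct (Req_dec a b) as [<-|Hab']; [lra|].
  apply Rnot_lt_le. intro Hlt.
  assert (Hcont : continuous f b) by (apply (ex_derive_continuous f); exists (df b); apply Hd; lra).
  destruct (continuous_lt_locally (fun _ => f a) f b (continuous_const _ _) Hcont Hlt)
    as [e He].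
  set (u := Rmax a (b - e / 2)).
  assert (Hu : a <= u < b /\ b - e / 2 <= u).
  { pose proof (cond_pos e). unfold u.
    split; [split; [apply Rmax_l|apply Rmax_lub_lt; lra]|apply Rmax_r]. }
  assert (f a < f u).
  { apply He. change (Rabs (u - b) < e). pose proof (cond_pos e). apply Rabs_def1; lra. }
  pose proof (Hbefore u (proj1 Hu)). lra.
Qed.

Lemma nondecreasing_of_derive_nonneg (f df : R -> R) (a b : R) :
  a <= b ->
  (forall s, a <= s <= b -> is_derive f s (df s)) ->
  (forall s, a <= s < b -> 0 <= df s) ->
  f a <= f b.
Proof.
  intros Hab Hd Hsign.
  assert (- f b <= - f a); [|lra].
  apply (nonincreasing_of_derive_nonpos (fun v => - f v) (fun v => - df v)); [exact Hab| |].
  - intros s Hs. exact (is_derive_opp f s (df s) (Hd s Hs)).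
  - intros s Hs. pose proof (Hsign s Hs). lra.
Qed.

Lemma is_derive_mul_exp (x X : R -> R) (k t dx dX : R) :
  is_derive x t dx -> is_derive X t dX ->
  is_derive (fun v => x v * exp (k * X v)) t (exp (k * X t) * (dx + k * dX * x t)).
Proof.
  intros Hx HX.
  assert (HE : is_derive (fun v => exp (k * X v)) t (k * dX * exp (k * X t))).
  { exact (is_derive_comp exp (fun v => k * X v) t _ _ (is_derive_exp _)
             (is_derive_scal X t k dX HX)). }
  replace (exp (k * X t) * (dx + k * dX * x t))
    with (dx * exp (k * X t) + x t * (k * dX * exp (k * X t))) by ring.
  exact (is_derive_mult _ _ t _ _ Hx HE Rmult_comm).
Qed.

Lemma is_lim_eventually_gt_pos (f : R -> R) (L : Rbar) :
  is_lim f p_infty L -> Rbar_lt 0 L ->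
  exists c, 0 < c /\ Rbar_locally p_infty (fun v => c < f v).
Proof.
  intros Hf HL.
  assert (Hc : exists c, 0 < c /\ Rbar_lt c L).
  { destruct L as [l| |]; simpl in HL |- *; try contradiction.
    - exists (l / 2). lra.
    - exists 1. split; [lra|exact I]. }
  destruct Hc as [c [Hc HcL]].
  exists c. split; [exact Hc|]. exact (Hf _ (open_Rbar_gt' L c HcL)).
Qed.

Lemma rate_limit_pos (g xp Xp : R -> R) (a hc : R) (L : Rbar) :
  (forall v, 0 < g v) -> is_lim g p_infty hc ->
  is_lim xp p_infty 0 ->
  is_lim (fun v => xp v * exp (a * hc * Xp v)) p_infty L -> Rbar_lt 0 L ->
  0 < hc.
Proof.
  intros Hg Hghc Hxp HL HLpos.
  assert (Hhc : Rbar_le 0 hc).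
  { apply (is_lim_le_loc (fun _ => 0) g p_infty); [|apply is_lim_const|exact Hghc].
    exists 0. intros v _. apply Rlt_le, Hg. }
  destruct (Rle_lt_or_eq_dec 0 hc Hhc) as [Hpos|Hzero]; [exact Hpos|exfalso].
  assert (Hxp' : is_lim (fun v => xp v * exp (a * hc * Xp v)) p_infty 0).
  { apply (is_lim_ext xp); [|exact Hxp].
    intro v. rewrite <- Hzero, Rmult_0_r, Rmult_0_l, exp_0. ring. }
  rewrite <- (is_lim_unique _ _ _ HL), (is_lim_unique _ _ _ Hxp') in HLpos.
  exact (Rlt_irrefl 0 HLpos).
Qed.

(* The slope a / (2 - a) of the wedge is chosen so that
   (1 - a / 2) (1 - a / (2 - a)) = 1 - a. *)
Lemma speed_damped_nonpos (a hc h p y : R) :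
  0 < a < 1 -> 0 < hc -> 0 < y -> y < a / (2 - a) * p -> (1 - a / 2) * hc < h ->
  1 / 2 * h * (y - p) * y + (1 - a) / 2 * hc * p * y <= 0.
Proof.
  intros Ha Hhc Hy Hyp Hh.
  assert (Hp : (2 - a) * y < a * p).
  { apply (Rmult_lt_compat_l (2 - a)) in Hyp; [|lra].
    replace ((2 - a) * (a / (2 - a) * p)) with (a * p) in Hyp by (field; lra).
    exact Hyp. }
  assert (Hyp' : y - p < 0) by nra.
  assert (h * (y - p) <= (1 - a / 2) * hc * (y - p)) by nra.
  assert (h * (y - p) + (1 - a) * hc * p <= 0) by nra.
  nra.
Qed.

Lemma speed_grown_nonneg (hc h p y : R) :
  0 <= y -> 0 <= p -> 0 <= h <= 2 * hc ->
  0 <= 1 / 2 * h * (y - p) * y + hc * p * y.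
Proof.
  intros Hy Hp Hh.
  replace (1 / 2 * h * (y - p) * y + hc * p * y)
    with (y * (1 / 2 * h * y + (hc - h / 2) * p)) by field.
  apply Rmult_le_pos; [exact Hy|]. nra.
Qed.

Section Trapping.

Variables (h : R -> R -> R) (xp xm Xp : R -> R) (hc alpha c delta v0 : R) (x : R -> R).

Let kappa := alpha / (2 - alpha).
Let k := (1 - alpha) / 2 * hc.

Hypothesis Hxm : forall v, xm v = 0.
Hypothesis Hxp_pos : forall v, 0 < xp v.
Hypothesis Hxp_cont : forall v, continuous xp v.
Hypothesis HXp : forall v, is_derive Xp v (xp v).
Hypothesis Hh_pos : forall v y, 0 < h v y.
Hypothesis Hhc : 0 < hc.
Hypothesis Halpha : 0 < alpha < 1.
Hypothesis Hc : 0 < c.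
Hypothesis Hh_near : forall v y, v0 <= v -> Rabs y < delta ->
  Rabs (h v y - hc) < alpha * hc / 2.
Hypothesis Hxp_small : forall v, v0 <= v -> xp v < delta.
Hypothesis Hc_lower : forall v, v0 <= v -> c < xp v * exp (k * Xp v).

Lemma kappa_bounds : 0 < kappa < 1.
Proof.
  unfold kappa. split.
  - apply Rdiv_lt_0_compat; lra.
  - apply (Rmult_lt_reg_r (2 - alpha)); [lra|]. field_simplify; lra.
Qed.

Lemma h_near_hc_in_wedge v y : v0 <= v -> 0 < y < kappa * xp v ->
  (1 - alpha / 2) * hc < h v y < (1 + alpha / 2) * hc.
Proof.
  intros Hv [Hy0 Hy1].
  destruct kappa_bounds as [_ Hkappa].
  assert (Rabs y < delta).
  { rewrite Rabs_pos_eq by lra. pose proof (Hxp_pos v). pose proof (Hxp_small v Hv). nra. }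
  destruct (Rabs_def2 _ _ (Hh_near v y Hv H)). lra.
Qed.

Lemma lt_wedge_of_weighted_lt v y : v0 <= v ->
  y * exp (k * Xp v) < kappa * c -> y < kappa * xp v.
Proof.
  intros Hv Hy.
  destruct kappa_bounds as [Hkappa _].
  apply (Rmult_lt_reg_r (exp (k * Xp v))); [apply exp_pos|].
  apply (Rlt_trans _ _ _ Hy). rewrite Rmult_assoc.
  apply Rmult_lt_compat_l; [exact Hkappa|exact (Hc_lower v Hv)].
Qed.

Lemma wedge_initial_point : exists y,
  between_AHs xp xm v0 y /\ 0 < y /\ y * exp (k * Xp v0) < kappa * c.
Proof.
  destruct kappa_bounds as [Hkappa0 Hkappa1].
  set (E0 := exp (k * Xp v0)).
  assert (HE0 : 0 < E0) by apply exp_pos.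
  exists (kappa * c / 2 / E0).
  assert (Hy0 : 0 < kappa * c / 2 / E0) by (apply Rdiv_lt_0_compat; nra).
  assert (HyE : kappa * c / 2 / E0 * E0 < kappa * c)
    by (replace (kappa * c / 2 / E0 * E0) with (kappa * c / 2) by (field; lra); nra).
  pose proof (lt_wedge_of_weighted_lt v0 _ (Rle_refl v0) HyE).
  pose proof (Hxp_pos v0).
  unfold between_AHs. rewrite Hxm. repeat split; nra.
Qed.

Hypothesis Hx : outgoing_geodesic h xp xm v0 x.
Hypothesis Hx0_pos : 0 < x v0.
Hypothesis Hx0_small : x v0 * exp (k * Xp v0) < kappa * c.

Let speed v := 1 / 2 * h v (x v) * (x v - xp v) * (x v - xm v).

Lemma weighted_nonincreasing t : v0 <= t ->
  (forall s, v0 <= s < t -> 0 < x s < kappa * xp s) ->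
  x t * exp (k * Xp t) <= x v0 * exp (k * Xp v0).
Proof.
  intros Ht Hwedge.
  apply (nonincreasing_of_derive_nonpos (fun v => x v * exp (k * Xp v))
           (fun v => exp (k * Xp v) * (speed v + k * xp v * x v))); [exact Ht| |].
  - intros s Hs. apply is_derive_mul_exp; [apply Hx; lra|apply HXp].
  - intros s Hs. destruct (Hwedge s Hs) as [Hs0 Hs1].
    destruct (h_near_hc_in_wedge s (x s) (proj1 Hs) (conj Hs0 Hs1)).
    assert (speed s + k * xp s * x s <= 0).
    { unfold speed, k. rewrite Hxm, Rminus_0_r.
      apply speed_damped_nonpos with (a := alpha); try lra. exact Hs1. }
    pose proof (exp_pos (k * Xp s)). nra.
Qed.

Lemma growth_nondecreasing t : v0 <= t ->
  (forall s, v0 <= s < t -> 0 < x s < kappa * xp s) ->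
  x v0 * exp (hc * Xp v0) <= x t * exp (hc * Xp t).
Proof.
  intros Ht Hwedge.
  apply (nondecreasing_of_derive_nonneg (fun v => x v * exp (hc * Xp v))
           (fun v => exp (hc * Xp v) * (speed v + hc * xp v * x v))); [exact Ht| |].
  - intros s Hs. apply is_derive_mul_exp; [apply Hx; lra|apply HXp].
  - intros s Hs. destruct (Hwedge s Hs) as [Hs0 Hs1].
    destruct (h_near_hc_in_wedge s (x s) (proj1 Hs) (conj Hs0 Hs1)).
    assert (0 <= speed s + hc * xp s * x s).
    { unfold speed. rewrite Hxm, Rminus_0_r.
      pose proof (Hxp_pos s). pose proof (Hh_pos s (x s)).
      apply speed_grown_nonneg; nra. }
    pose proof (exp_pos (hc * Xp s)). nra.
Qed.

Lemma geodesic_stays_in_wedge t : v0 <= t -> 0 < x t < kappa * xp t.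
Proof.
  revert t. apply real_induction.
  - split; [exact Hx0_pos|].
    exact (lt_wedge_of_weighted_lt v0 (x v0) (Rle_refl _) Hx0_small).
  - intros t Ht [Ht0 Ht1].
    assert (Hxt : continuous x t).
    { apply (ex_derive_continuous x). eexists. apply Hx, Ht. }
    assert (Hkxp : continuous (fun u => kappa * xp u) t)
      by exact (continuous_scal_r kappa xp t (Hxp_cont t)).
    unfold at_right, within.
    apply (filter_imp (fun u => 0 < x u /\ x u < kappa * xp u)).
    + intros u Hu _. exact Hu.
    + apply filter_and.
      * exact (continuous_lt_locally (fun _ => 0) x t (continuous_const _ _) Hxt Ht0).
      * exact (continuous_lt_locally x _ t Hxt Hkxp Ht1).
  - intros t Ht Hwedge. split.
    + pose proof (growth_nondecreasing t (Rlt_le _ _ Ht) Hwedge).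
      pose proof (exp_pos (hc * Xp v0)). pose proof (exp_pos (hc * Xp t)). nra.
    + apply (lt_wedge_of_weighted_lt t (x t) (Rlt_le _ _ Ht)).
      apply Rle_lt_trans with (2 := Hx0_small).
      exact (weighted_nonincreasing t (Rlt_le _ _ Ht) Hwedge).
Qed.

Lemma geodesic_between_AHs t : v0 <= t -> between_AHs xp xm t (x t).
Proof.
  intros Ht.
  destruct (geodesic_stays_in_wedge t Ht).
  destruct kappa_bounds.
  pose proof (Hxp_pos t).
  unfold between_AHs. rewrite Hxm. split; nra.
Qed.

End Trapping.

Theorem proposition2
  (h : R -> R -> R) (xp xm Xp : R -> R) (hc alpha : R)
  (* Case 1: the inner AH is static, x_- = 0 *)
  (Hcase1 : forall v, xm v = 0)
  (* the outer AH lies strictly outside the inner one *)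
  (Hxp_pos : forall v, xm v < xp v)
  (* d r_+/dv < 0 *)
  (Hxp_decr : forall v, ex_derive xp v /\ Derive xp v < 0)
  (* r_+ -> r_c *)
  (Hxp_lim : is_lim xp p_infty 0)
  (* X_+ is a primitive of x_+ *)
  (HXp : forall v, is_derive Xp v (xp v))
  (* h = A F > 0, continuous *)
  (Hh_pos : forall v y, 0 < h v y)
  (Hh_cont : forall v y, continuous (fun p : R * R => h (fst p) (snd p)) (v, y))
  (* h_c = lim_{v -> oo} h(v, x = 0) *)
  (Hhc : is_lim (fun v => h v 0) p_infty hc)
  (* regular limit of h at (v = oo, x = 0) *)
  (Hh_reg : forall eps, 0 < eps -> exists V delta, 0 < delta /\
     forall v y, V <= v -> Rabs y < delta -> Rabs (h v y - hc) < eps)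
  (* radially outgoing null geodesics exist through every point between the
     AHs, for all later advanced times *)
  (Hgeod : forall v0 y0, between_AHs xp xm v0 y0 ->
     exists x : R -> R, x v0 = y0 /\ outgoing_geodesic h xp xm v0 x)
  (* the hypothesis of the proposition *)
  (Halpha : 0 < alpha < 1)
  (L : Rbar)
  (HL : is_lim (fun v => xp v * exp ((1 - alpha) / 2 * hc * Xp v)) p_infty L)
  (HLpos : Rbar_lt 0 L) :
  type2 h xp xm.
Proof.
  assert (Hhc0 : 0 < hc)
    by exact (rate_limit_pos _ _ _ _ _ _ (fun v => Hh_pos v 0) Hhc Hxp_lim HL HLpos).
  assert (Hxp0 : forall v, 0 < xp v) by (intro v; rewrite <- (Hcase1 v); apply Hxp_pos).
  assert (Hxp_cont : forall v, continuous xp v)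
    by (intro v; apply (ex_derive_continuous xp), Hxp_decr).
  destruct (Hh_reg (alpha * hc / 2)) as [V [delta [Hdelta Hnear]]]; [nra|].
  destruct (is_lim_eventually_gt_pos _ _ HL HLpos) as [c [Hc Hlower]].
  assert (Hsmall : Rbar_locally p_infty (fun v => xp v < delta))
    by exact (Hxp_lim _ (open_Rbar_lt' 0 delta Hdelta)).
  assert (Hlate : Rbar_locally p_infty (fun v => V <= v)) by (exists V; intros; lra).
  destruct (filter_and _ _ Hlate (filter_and _ _ Hsmall Hlower)) as [M HM].
  assert (Hv0 : forall v, M + 1 <= v -> V <= v /\ xp v < delta /\
                  c < xp v * exp ((1 - alpha) / 2 * hc * Xp v))
    by (intros v Hv; apply HM; lra).
  destruct (wedge_initial_point xp xm Xp hc alpha c (M + 1) Hcase1 Hxp0 Halpha Hc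
              (fun v Hv => proj2 (proj2 (Hv0 v Hv))))
    as [y0 [Hy0 [Hy0_pos Hy0_small]]].
  destruct (Hgeod (M + 1) y0 Hy0) as [x [Hx0 Hx]].
  exists (M + 1), x. split; [exact Hx|].
  rewrite <- Hx0 in Hy0_pos, Hy0_small.
  apply (geodesic_between_AHs h xp xm Xp hc alpha c delta (M + 1) x
           Hcase1 Hxp0 Hxp_cont HXp Hh_pos Hhc0 Halpha); try assumption.
  - intros v y Hv. apply Hnear, (Hv0 v Hv).
  - intros v Hv. apply (Hv0 v Hv).
  - intros v Hv. apply (Hv0 v Hv).
Qed.
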